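(* Let $n\geq 2$. Then $T\cap S_{n-1}=\{\mathrm{id}\}$, and for every $2\leq i\leq n$, $$T\cap \big(S_{n-1}(1,i)\big)=\{C_{m_1}\cdots C_{m_{i-1}}\ |\ 2\leq m_1<\dots<m_{i-1}\leq n\}.$$
   Context: Permutations in $S_n$ are composed right-to-left: $(\sigma\tau)(k)=\sigma(\tau(k))$. $S_{n-1}\subset S_n$ denotes the subgroup of permutations $\tau$ with $\tau(1)=1$, and $S_{n-1}(1,i)=\{\tau\cdot(1,i):\tau\in S_{n-1}\}$, where $(1,i)$ is a transposition. For $m\geq 2$, $C_m$ denotes the cyclic permutation $(1,m,m-1,\dots,2)$ (i.e. $1\mapsto m\mapsto m-1\mapsto\dots\mapsto 2\mapsto 1$). $T\subset S_n$ is defined as $T:=\{\mathrm{id}\}\cup\bigcup_{i=1}^{n-1}\{C_{m_1}\cdots C_{m_i}\ |\ 2\leq m_1<\dots<m_i\leq n\}$. *)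

(* Permutations of {1,...,n} are modelled as {perm 'I_n},
   with the paper's point k (1 <= k <= n) represented by the ordinal of value k-1. *)
From mathcomp Require Import all_boot all_fingroup.
From mathcomp Require Import zify.
Set Implicit Arguments. Unset Strict Implicit. Unset Printing Implicit Defensive.

(* Paper's product (right-to-left composition): (pmul s t) x = s (t x).
   Note that MathComp's group law is (t * s) x = s (t x). *)
Definition pmul n (s t : {perm 'I_n}) : {perm 'I_n} := (t * s)%g.

(* The cycle C_m = (1, m, m-1, ..., 2) on 0-based values:
   0 |-> m-1, j |-> j-1 for 1 <= j <= m-1, other points fixed.
   (Only meaningful for 2 <= m <= n; identity otherwise.) *)
Definition cycv (n m i : nat) : nat :=
  if (1 < m) && (m <= n) then
    (if i == 0 then m.-1 else if i < m then i.-1 else i)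
  else i.

Lemma cycv_lt n m (i : 'I_n) : cycv n m i < n.
Proof. have := ltn_ord i; rewrite /cycv; repeat (case: ifP => ?); lia. Qed.

Lemma cycv_inj n m : injective (fun i : 'I_n => Ordinal (cycv_lt m i)).
Proof.
move=> i j /(congr1 val) /=; rewrite /cycv => h; apply: val_inj => /=.
have := ltn_ord i; have := ltn_ord j; move: h; repeat (case: ifP => ?); lia.
Qed.

Definition C n m : {perm 'I_n} := perm (@cycv_inj n m).

(* The transposition (1, k), i.e. swapping the 0-based values 0 and k-1
   (only meaningful for 2 <= k <= n; identity otherwise). *)
Definition trv (n k i : nat) : nat :=
  if (1 < k) && (k <= n) then
    (if i == 0 then k.-1 else if i == k.-1 then 0 else i)
  else i.

Lemma trv_lt n k (i : 'I_n) : trv n k i < n.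
Proof. have := ltn_ord i; rewrite /trv; repeat (case: ifP => ?); lia. Qed.

Lemma trv_inj n k : injective (fun i : 'I_n => Ordinal (trv_lt k i)).
Proof.
move=> i j /(congr1 val) /=; rewrite /trv => h; apply: val_inj => /=.
have := ltn_ord i; have := ltn_ord j; move: h; repeat (case: ifP => ?); lia.
Qed.

Definition transp1 n k : {perm 'I_n} := perm (@trv_inj n k).

Definition inS1 n (s : {perm 'I_n}) : Prop :=
  forall x : 'I_n, val x = 0 -> val (s x) = 0.

Definition inCoset n k (s : {perm 'I_n}) : Prop :=
  exists tau, inS1 tau /\ s = pmul tau (transp1 n k).

Definition prodC n (ms : seq nat) : {perm 'I_n} :=
  foldr (fun m acc => pmul (C n m) acc) 1%g ms.

Definition incr_seq n j (ms : seq nat) : Prop :=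
  [/\ size ms = j, sorted ltn ms & all (fun m => (1 < m) && (m <= n)) ms].

Definition inT n (s : {perm 'I_n}) : Prop :=
  s = 1%g \/
  exists j ms, [/\ 1 <= j <= n.-1, incr_seq n j ms & s = prodC n ms].

From mathcomp Require Import all_boot all_fingroup.
From mathcomp Require Import zify.

(* The coset S_{n-1}(1,k) consists of the permutations sending k to 1.  A
   product C_{m_1} ... C_{m_j} with 2 <= m_1 < ... < m_j <= n sends j+1 to 1:
   acting right to left, C_{m_j} moves j+1 down to j, C_{m_(j-1)} moves j down
   to j-1, ..., and C_{m_1} moves 2 to 1, since m_l >= l+1 throughout.  Hence
   such a product lies in the coset S_{n-1}(1,j+1) and in no other, which
   determines the number of factors of every element of T in a given coset. *)

Lemma prodC_cons n m ms x : prodC n (m :: ms) x = C n m (prodC n ms x).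
Proof. by rewrite /prodC /= /pmul permM. Qed.

Lemma C_val n m x : val (C n m x) = cycv n m x.
Proof. by rewrite /C permE. Qed.

Lemma transp1_val n k x : val (transp1 n k x) = trv n k x.
Proof. by rewrite /transp1 permE. Qed.

Lemma transp1K n k : (transp1 n k * transp1 n k)%g = 1%g.
Proof.
apply/permP => x; apply: val_inj; rewrite permM perm1 !transp1_val /trv.
have := ltn_ord x; case: ifP => [/andP [k_gt1 k_le] x_lt | -> //].
rewrite k_gt1 k_le /=.
by case: (x =P 0 :> nat) => x0; case: (x =P k.-1 :> nat) => xk /=;
  repeat case: ifP => /eqP ?; lia.
Qed.

Lemma transp1_val_eq0 {n k} (x : 'I_n) : 1 <= k <= n ->
  (val (transp1 n k x) == 0) = (val x == k.-1).
Proof.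
move=> /andP [k_gt0 k_le]; rewrite transp1_val /trv k_le andbT.
by case: ltnP => k_gt1 /=; repeat case: ifP => /eqP ?; lia.
Qed.

Lemma inCosetP {n k} (s : {perm 'I_n}) : 1 <= k <= n ->
  inCoset k s <-> forall x : 'I_n, val x = k.-1 -> val (s x) = 0.
Proof.
move=> k_range; split.
- move=> [tau [tau1 ->]] x xk; rewrite /pmul permM; apply: tau1.
  by apply/eqP; rewrite transp1_val_eq0 // xk.
- move=> s_k; exists (transp1 n k * s)%g; split.
  + move=> x x0; rewrite permM; apply: s_k; apply/eqP.
    by rewrite -(transp1_val_eq0 _ k_range) -permM transp1K perm1 x0.
  + by rewrite /pmul mulgA transp1K mul1g.
Qed.

Lemma prodC_path_val n ms : forall a (x : 'I_n), path ltn a.+1 ms ->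
  all (fun m => m <= n) ms -> val x = a + size ms -> val (prodC n ms x) = a.
Proof.
elim: ms => [|m ms IH] a x /=; first by rewrite perm1 addn0.
move=> /andP [a_lt_m path_ms] /andP [m_le all_ms] xE.
have path_ms' : path ltn a.+2 ms.
  by case: ms path_ms {IH all_ms xE} => [|m' ms] //= /andP [? ->]; rewrite andbT; lia.
rewrite prodC_cons C_val (IH a.+1 x path_ms' all_ms) ?xE ?addSnnS // /cycv.
have -> : (1 < m) && (m <= n) by lia.
by rewrite a_lt_m.
Qed.

Lemma prodC_val_eq0 {n j ms} (x : 'I_n) : j < n -> incr_seq n j ms ->
  (val (prodC n ms x) == 0) = (val x == j).
Proof.
move=> j_lt [size_ms sorted_ms range_ms].
have prodC_j : val (prodC n ms (Ordinal j_lt)) = 0.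
  apply: prodC_path_val; last by rewrite size_ms.
  - case: ms sorted_ms range_ms {size_ms} => [|m ms] //= path_ms.
    by case/andP => /andP [-> _].
  - by apply/allP => m /(allP range_ms) /andP [].
apply/eqP/eqP => [x0 | xj].
  suff -> : x = Ordinal j_lt by [].
  by apply: (@perm_inj _ (prodC n ms)); apply: val_inj; rewrite /= x0 prodC_j.
by rewrite -prodC_j (_ : x = Ordinal j_lt) //; apply: val_inj.
Qed.

Lemma inT_preimage0 {n k} (s : {perm 'I_n}) : 1 <= k <= n ->
  (inT s /\ forall x : 'I_n, val x = k.-1 -> val (s x) = 0) <->
  exists ms, incr_seq n k.-1 ms /\ s = prodC n ms.
Proof.
move=> k_range; have k_lt : k.-1 < n by lia.
split.
- move=> [[-> | [j [ms [j_range inc ->]]]] s_k].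
  + have := s_k (Ordinal k_lt) erefl; rewrite perm1 /= => k1.
    by exists [::]; rewrite k1.
  + have j_lt : j < n by lia.
    have := s_k (Ordinal k_lt) erefl => /eqP.
    by rewrite (prodC_val_eq0 _ j_lt inc) => /eqP /= ->; exists ms.
- move=> [ms [inc ->]]; split.
  + case: (posnP k.-1) inc => [-> | k_gt1] inc.
      by left; case: inc; case: ms.
    by right; exists k.-1, ms; split => //; lia.
  + by move=> x xk; apply/eqP; rewrite (prodC_val_eq0 _ k_lt inc) xk.
Qed.

Theorem lemma3p3 (n : nat) (hn : 2 <= n) :
  (forall s : {perm 'I_n}, (inT s /\ inS1 s) <-> s = 1%g) /\
  (forall i : nat, 2 <= i <= n ->
     forall s : {perm 'I_n},
       (inT s /\ inCoset i s) <->
       (exists ms, incr_seq n i.-1 ms /\ s = prodC n ms)).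
Proof.
split=> [s | i i_range s].
- have one_range : 1 <= 1 <= n by lia.
  rewrite /inS1 (inT_preimage0 s one_range).
  split=> [[ms [[size0 _ _] ->]] | ->]; last by exists [::].
  by case: ms size0.
- have i_range' : 1 <= i <= n by lia.
  by rewrite -(inT_preimage0 s i_range') inCosetP.
Qed.
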